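(* Let $V$ be a finite-dimensional real vector space and $\mathcal{S}=\{x_i\}_{1\le i\le n}$ a finite set of elements of $V$, labeled by integers $\{y_i\}_{1\le i\le n}\subset\{1,\dots,K\}$ with $K\le n$. For $k\in\{1,\dots,K\}$ let $C_k=\{x_i\in\mathcal{S}: y_i=k\}$, and let $S_k$ be a non-empty subset of $C_k$ with cardinality $|S_k|$. Let $W$ be a finite-dimensional real vector space with a fixed basis and $\mathcal{L}:V\to W$ a linear map. Let $A_{\mathcal{L}(S_k)}\in\mathbb{R}^{(1+\dim W)\times|S_k|}$ be the matrix whose columns are, for each element $s\in S_k$, the coordinate vector of $\mathcal{L}(s)$ with an additional entry $1$ appended at the bottom. If for every $x\in\mathcal{S}\setminus C_k$ the linear system $$A_{\mathcal{L}(S_k)}w=\begin{pmatrix}\mathcal{L}(x)\\1\end{pmatrix}$$ has no nonnegative solution $w\in\mathbb{R}_+^{|S_k|}$, then $S_k$ is pure in $\mathcal{S}$.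
   Context: The convex hull $\mathcal{E}(A)$ of a non-empty set $A\subset V$ is the smallest convex set containing $A$, equivalently the set of all convex combinations of finite subsets of $A$. Each $x_i\in\mathcal{S}$ carries the label $y_i$, written $\mathcal{K}(x_i)=y_i$. A non-empty subset $\mathcal{S}_{\mathcal{I}}\subset\mathcal{S}$ is called pure in $\mathcal{S}$ if $\mathcal{K}(\mathcal{S}\cap\mathcal{E}(\mathcal{S}_{\mathcal{I}}))$ is a singleton, i.e. all points of $\mathcal{S}$ lying in the convex hull of $\mathcal{S}_{\mathcal{I}}$ have the same label. *)

From HB Require Import structures.
From mathcomp Require Import all_boot all_order all_algebra.
From mathcomp Require Import reals.
Set Implicit Arguments. Unset Strict Implicit. Unset Printing Implicit Defensive.
Import Order.TTheory GRing.Theory Num.Theory.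
Local Open Scope ring_scope.

Section Defs.
Variable R : realType.

Definition conv_hull (V : lmodType R) (A : V -> Prop) : V -> Prop :=
  fun z => exists (m : nat) (lam : 'I_m -> R) (pts : 'I_m -> V),
    [/\ forall i, 0 <= lam i,
        \sum_(i < m) lam i = 1,
        forall i, A (pts i)
      & z = \sum_(i < m) lam i *: pts i].

(* A subset of S is described by the set
   I of its indices.  I is pure in S iff the set of labels of the points of S
   lying in the convex hull of {x_i | i in I} is a singleton. *)
Definition pure (V : lmodType R) (n : nat) (x : 'I_n -> V) (y : 'I_n -> nat)
  (I : {set 'I_n}) : Prop :=
  exists c : nat, forall l : nat,
    (exists j : 'I_n, conv_hull (fun v => exists2 i, i \in I & v = x i) (x j)
                      /\ y j = l) <-> l = c.

Definition augment (p : nat) (v : 'rV[R]_p) : 'cV[R]_(p + 1) :=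
  col_mx v^T (const_mx 1).

Definition aug_matrix (V : lmodType R) (p n : nat) (L : V -> 'rV[R]_p)
  (x : 'I_n -> V) (I : {set 'I_n}) : 'M[R]_(p + 1, #|I|) :=
  \matrix_(r, j) augment (L (x (enum_val j))) r ord0.

End Defs.

From HB Require Import structures.
From mathcomp Require Import all_boot all_order all_algebra.
From mathcomp Require Import reals.
Set Implicit Arguments. Unset Strict Implicit. Unset Printing Implicit Defensive.
Import Order.TTheory GRing.Theory Num.Theory.
Local Open Scope ring_scope.

(* If x_j = sum_t lam_t x_(f t) is a convex combination of points of S_k,
   then by linearity L(x_j) is the same combination of the L(x_(f t)), and
   since the weights sum to 1 so is (L(x_j); 1) of the columns (L(x_(f t)); 1).
   Collecting the weights of equal columns gives a nonnegative solution of
   A_{L(S_k)} w = (L(x_j); 1).  So no point of S with a label other than k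
   lies in the convex hull of S_k, while S_k itself lies there. *)

Section PureByConeTest.
Variable R : realType.

Lemma augment_convex (p m : nat) (lam : 'I_m -> R) (v : 'I_m -> 'rV[R]_p) :
  \sum_(t < m) lam t = 1 ->
  augment (\sum_(t < m) lam t *: v t) = \sum_(t < m) lam t *: augment (v t).
Proof.
move=> sum_lam; rewrite /augment.
under [RHS]eq_bigr do rewrite scale_col_mx.
apply/matrixP => r c; rewrite !ord1 summxE.
case: (split_ordP r) => r' ->.
- rewrite col_mxEu mxE summxE; apply: eq_bigr => t _.
  by rewrite col_mxEu !mxE.
- rewrite col_mxEd mxE -[LHS]sum_lam; apply: eq_bigr => t _.
  by rewrite col_mxEd !mxE mulr1.
Qed.

Variable V : lmodType R.

Lemma conv_hull_imageP (n : nat) (x : 'I_n -> V) (I : {set 'I_n}) (z : V) :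
  conv_hull (fun v => exists2 i, i \in I & v = x i) z ->
  exists m (lam : 'I_m -> R) (f : 'I_m -> 'I_n),
    [/\ forall t, 0 <= lam t, \sum_(t < m) lam t = 1,
        forall t, f t \in I & z = \sum_(t < m) lam t *: x (f t)].
Proof.
case=> m [lam [pts [lam_ge0 sum_lam pts_in ->]]].
have /fin_all_exists[f f_spec] : forall t, exists i, i \in I /\ pts t = x i.
  by move=> t; have [i iI ->] := pts_in t; exists i.
exists m, lam, f; split=> // [t|]; first by case: (f_spec t).
by apply: eq_bigr => t _; case: (f_spec t) => _ ->.
Qed.

Lemma aug_matrix_mulmx (p n : nat) (L : V -> 'rV[R]_p) (x : 'I_n -> V)
    (I : {set 'I_n}) (w : 'cV[R]_#|I|) :
  aug_matrix L x I *m w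
    = \sum_(j < #|I|) w j ord0 *: augment (L (x (enum_val j))).
Proof.
apply/matrixP => r c; rewrite !ord1 !mxE summxE.
by apply: eq_bigr => j _; rewrite !mxE mulrC.
Qed.

Lemma aug_matrix_nonneg_solution (p n : nat) (L : {linear V -> 'rV[R]_p})
    (x : 'I_n -> V) (I : {set 'I_n}) (z : V) :
  conv_hull (fun v => exists2 i, i \in I & v = x i) z ->
  exists w : 'cV[R]_#|I|,
    (forall j, 0 <= w j ord0) /\ aug_matrix L x I *m w = augment (L z).
Proof.
case/conv_hull_imageP => m [lam [f [lam_ge0 sum_lam fI ->]]].
exists (\col_(j < #|I|) \sum_(t < m | f t == enum_val j) lam t).
split=> [j|]; first by rewrite mxE sumr_ge0.
rewrite aug_matrix_mulmx linear_sum.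
under [in RHS]eq_bigr do rewrite linearZ.
rewrite augment_convex // (partition_big f (mem I)) //=.
rewrite (big_enum_val (fun i => \sum_(t < m | f t == i) lam t *: _)).
apply: eq_bigr => j _; rewrite mxE scaler_suml.
by apply: eq_bigr => t /eqP ->.
Qed.

Lemma pure_of_conv_hull_label (n : nat) (x : 'I_n -> V) (y : 'I_n -> nat)
    (I : {set 'I_n}) (k : nat) :
  I != set0 -> (forall i, i \in I -> y i = k) ->
  (forall j, conv_hull (fun v => exists2 i, i \in I & v = x i) (x j) ->
     y j = k) ->
  pure x y I.
Proof.
move=> /set0Pn[i iI] yI hull_y; exists k => l; split.
  by case=> j [/hull_y-> <-].
move=> ->; exists i; split; last exact: yI.
exists 1%N, (fun _ => 1), (fun _ => x i).
by split=> [_||_|]; rewrite ?big_ord1 ?scale1r //; exists i.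
Qed.

End PureByConeTest.

Theorem corollary1 (R : realType) (V : vectType R) (n K : nat)
  (x : 'I_n -> V) (y : 'I_n -> nat)
  (x_inj : injective x)
  (y_range : forall i, (1 <= y i <= K)%N)
  (K_le_n : (K <= n)%N)
  (k : nat) (k_range : (1 <= k <= K)%N)
  (Sk : {set 'I_n})
  (Sk_sub_Ck : forall i, i \in Sk -> y i = k)
  (Sk_nonempty : Sk != set0)
  (p : nat) (L : {linear V -> 'rV[R]_p}) :
  (forall i : 'I_n, y i != k ->
     ~ exists w : 'cV[R]_#|Sk|,
         (forall j, 0 <= w j ord0) /\
         aug_matrix L x Sk *m w = augment (L (x i))) ->
  pure x y Sk.
Proof.
move=> no_cone_solution.
apply: pure_of_conv_hull_label Sk_nonempty Sk_sub_Ck _ => j hull_j.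
apply/eqP/negPn/negP => yj_neq_k; apply: (no_cone_solution j yj_neq_k).
exact: aug_matrix_nonneg_solution.
Qed.
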